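(* Let $A^{I_1,\dots,I_s}_{\sigma_1,\dots,\sigma_s,i_{s+1},\dots,i_{n-1}}$ ($s=0,\dots,n-1$, $|I_l|=r-1$) be smooth functions on $V^{r-1}$ with the symmetry property described in the context, let $\mathcal{L}$ be defined by $$\mathcal{L}^{I_1,\dots,I_s}_{\sigma_1,\dots,\sigma_s,i_{s+1},\dots,i_n}=\sum_{k=1}^{s}(-1)^{k-1}\partial^{I_k}_{\sigma_k}A^{I_1,\dots,\widehat{I_k},\dots,I_s}_{\sigma_1,\dots,\widehat{\sigma_k},\dots,\sigma_s,i_{s+1},\dots,i_n}+\sum_{k=s+1}^{n}(-1)^{k-1}d_{i_k}A^{I_1,\dots,I_s}_{\sigma_1,\dots,\sigma_s,i_{s+1},\dots,\widehat{i_k},\dots,i_n}$$ ($d_j=d^{r-1}_j$), and let $L=\sum_{s=0}^{n}\frac{1}{s!(n-s)!}\sum_{|I_1|,\dots,|I_s|=r-1}\mathcal{L}^{I_1,\dots,I_s}_{\sigma_1,\dots,\sigma_s,i_{s+1},\dots,i_n}\mathcal{J}^{\sigma_1,\dots,\sigma_s,i_{s+1},\dots,i_n}_{I_1,\dots,I_s}$. Then there exist smooth functions $V^j$, $j=1,\dots,n$, on $V^r$ such that $$L=\sum_{j=1}^n d_jV^j .$$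
   Context: $\pi:Y\to X$ is a fibre bundle, $\dim X=n$, fibre dimension $m$, with adapted chart $(V,\psi)$, $\psi=(x^i,y^\sigma)$, and associated charts $(V^k,\psi^k)$ on jet prolongations $J^kY$ with coordinates $x^i,y^\sigma_J$, $|J|\le k$ ($y^\sigma_J$ symmetric in $J$). $\partial^J_\sigma=\frac{r_1!\cdots r_n!}{|J|!}\partial/\partial y^\sigma_J$ ($r_l$ the multiplicity of $l$ in $J$); sums over multi-indices run over all ordered tuples and repeated indices are summed. Formal derivatives: $d_i^{p}=\partial/\partial x^i+\sum_{k=0}^{p-1}y^\sigma_{ij_1\dots j_k}\partial^{j_1\dots j_k}_\sigma$. Hyper-Jacobians: $\mathcal{J}^{\sigma_1,\dots,\sigma_s,i_{s+1},\dots,i_n}_{I_1,\dots,I_s}=\sum_{i_1,\dots,i_s}\varepsilon^{i_1\dots i_n}\prod_{l=1}^{s}y^{\sigma_l}_{I_li_l}$. Symmetry property: $A^{I_{P(1)},\dots,I_{P(s)}}_{\sigma_{P(1)},\dots,\sigma_{P(s)},i_{Q(s+1)},\dots,i_{Q(q)}}=(-1)^{|P|+|Q|}A^{I_1,\dots,I_s}_{\sigma_1,\dots,\sigma_s,i_{s+1},\dots,i_q}$ for all permutations $P$ of $\{1,\dots,s\}$ and $Q$ of $\{s+1,\dots,q\}$. *)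

From HB Require Import structures.
From mathcomp Require Import all_boot all_order all_algebra all_fingroup.
From mathcomp Require Import all_classical all_reals.
From mathcomp Require Import topology normedtype derive.
Set Implicit Arguments. Unset Strict Implicit. Unset Printing Implicit Defensive.
Import Order.TTheory GRing.Theory Num.Theory.
Import numFieldNormedType.Exports.
Local Open Scope ring_scope.
Local Open Scope classical_set_scope.

(* Coordinates of the associated chart (V^k, psi^k) on J^k Y.          *)
(* n = dim X, m = fibre dimension.                                     *)
(* A symmetric multi-index J = (j_1..j_p), p <= k, is recorded by its  *)
(* multiplicities r_l (l < n).                                          *)
Definition mi (n k : nat) :=
  {c : {ffun 'I_n -> 'I_k.+1} | (\sum_(l < n) (c l : nat) <= k)%N}.

Definition mi0 (n k : nat) : mi n k.
Proof. by exists [ffun => ord0]; rewrite big1 // => l _; rewrite ffunE. Defined.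

(* coordinate labels: x^i (inl i) and y^sigma_J (inr (sigma, J)) *)
Definition coord (n m k : nat) := ('I_n + ('I_m * mi n k))%type.

(* the multi-index of an ordered tuple J (meaningful when size J <= k) *)
Definition mi_of (n k : nat) (J : seq 'I_n) : mi n k :=
  insubd (mi0 n k) [ffun l => inord (count_mem l J)].

Definition xc (n m k : nat) (i : 'I_n) : coord n m k := inl i.
Definition yc (n m k : nat) (s : 'I_m) (J : seq 'I_n) : coord n m k :=
  inr (s, mi_of k J).

(* points of psi^k(V^k) ⊂ R^N, N = number of coordinates *)
Definition pt (R : realType) (n m k : nat) := 'rV[R]_#|{: coord n m k}|.

Definition cv (R : realType) n m k (p : pt R n m k) (c : coord n m k) : R :=
  p ord0 (enum_rank c).

Definition ev (R : realType) n m k (c : coord n m k) : pt R n m k :=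
  delta_mx ord0 (enum_rank c).

Definition emb_mi (n k l : nat) (J : mi n k) : mi n l :=
  insubd (mi0 n l) [ffun i => inord (val J i : nat)].
Definition emb (n m k l : nat) (c : coord n m k) : coord n m l :=
  match c with inl i => inl i | inr (s, J) => inr (s, emb_mi l J) end.

(* the jet projection pi^{l,k} : V^l -> V^k in coordinates (k <= l) *)
Definition projk (R : realType) n m k l (p : pt R n m l) : pt R n m k :=
  \row_j cv p (emb l (enum_val j)).

(* psi^k(V^k) = psi(V) x R^{...}: the points whose order-0 part lies in W *)
Definition domk (R : realType) n m k (W : set (pt R n m 0)) : set (pt R n m k) :=
  [set p | W (projk 0 p)].

Definition iterD (R : realType) N (es : seq 'I_N) (f : 'rV[R]_N -> R) :
    'rV[R]_N -> R :=
  foldr (fun e g => 'D_(delta_mx ord0 e) g) f es.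

Definition smooth_on (R : realType) N (U : set 'rV[R]_N) (f : 'rV[R]_N -> R) :=
  forall es : seq 'I_N, forall p, U p ->
    {for p, continuous (iterD es f)} /\
    forall e, derivable (iterD es f) p (delta_mx ord0 e).

Definition pd (R : realType) n m k (c : coord n m k) (f : pt R n m k -> R) :
    pt R n m k -> R :=
  fun p => 'D_(ev R c) f p.

Definition pdJ (R : realType) n m k (s : 'I_m) (J : seq 'I_n)
    (f : pt R n m k -> R) : pt R n m k -> R :=
  fun p => (\prod_(l < n) (count_mem l J)`!)%:R / (size J)`!%:R
           * pd (yc k s J) f p.

Definition fd (R : realType) n m k (i : 'I_n) (f : pt R n m k -> R) :
    pt R n m k.+1 -> R :=
  fun p => pd (xc m k i) f (projk k p)
    + \sum_(a < k) \sum_(s : 'I_m) \sum_(J : a.-tuple 'I_n)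
        cv p (yc k.+1 s (i :: tval J)) * pdJ s (tval J) f (projk k p).

Definition eps (R : realType) (n : nat) (t : seq 'I_n) : R :=
  \sum_(P : 'S_n) (map P (enum 'I_n) == t)%:R * (-1) ^+ P.

(* u runs over the triples (sigma_l, I_l, i_l), l = 1..s *)
(* (the I_l are multi-indices of length k-1, so I_l i_l has length k)    *)
Definition hjac (R : realType) n m k (sg : seq 'I_m) (I : seq (seq 'I_n))
    (i : seq 'I_n) (p : pt R n m k) : R :=
  \sum_(t : (size sg).-tuple 'I_n)
     eps R (tval t ++ i) *
     \prod_(u <- zip sg (zip I (tval t)))
        cv p (yc k u.1 (rcons u.2.1 u.2.2)).

Definition dropi T (a : nat) (s : seq T) := take a s ++ drop a.+1 s.

Definition permt T s (P : 'S_s) (t : s.-tuple T) : s.-tuple T :=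
  [tuple tnth t (P j) | j < s].

(* The family A is given as a function of (sigma_1..sigma_s), (I_1..I_s), *)
(* (i_{s+1}..i_{n-1}) with values functions on V^{r-1}, r = q.+1.         *)
Definition Afam (R : realType) n m q :=
  seq 'I_m -> seq (seq 'I_n) -> seq 'I_n -> pt R n m q -> R.

(* u runs over the pairs (k, (sigma_k, I_k)) resp. (k, i_k) *)
(* (function on V^r, r = q.+1), with s = size sg                          *)
Definition Lcal (R : realType) n m q (A : Afam R n m q)
    (sg : seq 'I_m) (I : seq (seq 'I_n)) (i : seq 'I_n) (p : pt R n m q.+1) : R :=
  \sum_(u <- zip (iota 0 (size sg)) (zip sg I)) (-1) ^+ u.1 *
      pdJ u.2.1 u.2.2 (A (dropi u.1 sg) (dropi u.1 I) i) (projk q p)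
  + \sum_(u <- zip (iota 0 (size i)) i) (-1) ^+ (size sg + u.1) *
      fd u.2 (A sg I (dropi u.1 i)) p.

Definition Lag (R : realType) n m q (A : Afam R n m q) (p : pt R n m q.+1) : R :=
  \sum_(s < n.+1) ((s`! * (n - s)`!)%:R)^-1 *
    \sum_(sg : s.-tuple 'I_m) \sum_(I : s.-tuple (q.-tuple 'I_n))
      \sum_(i : (n - s).-tuple 'I_n)
        Lcal A sg (map val I) i p * hjac sg (map val I) i p.

(* Take V^j = sum_s 1/(s!(n-1-s)!) sum A^{I_1..I_s}_{sigma_1..sigma_s,i_{s+1}..i_{n-1}} H_j
   with H_j the hyper-Jacobian carrying the extra upper index j in front of all
   the others.  The hyper-Jacobians only involve jet coordinates of the top
   order r, which the formal derivative d_j of functions on V^r does not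
   differentiate, so d_j V^j only differentiates the A's, and
   d_j A = d^{r-1}_j A + sum_{|J| = r-1} y^nu_{jJ} d^J_nu A.
   In each term of L, expanding the hyper-Jacobian in the free index i_k (a
   reordering of the indices of epsilon) turns the second sum of \mathcal{L}
   into the d^{r-1}_j A terms, the n-s possible positions of i_k being absorbed
   by the factorials; expanding it along the column (sigma_k, I_k), using the
   symmetry of y^nu_{I_k j} in its lower indices, turns the first sum into the
   d^J_nu A terms, the s positions of the column being absorbed likewise. *)

From Pilot Require Import Defs.
From HB Require Import structures.
From mathcomp Require Import all_boot all_order all_algebra all_fingroup.
From mathcomp Require Import all_classical all_reals.
From mathcomp Require Import topology normedtype derive.
From mathcomp Require Import ring zify.
Import Order.TTheory GRing.Theory Num.Theory.
Import numFieldNormedType.Exports.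
Set Implicit Arguments. Unset Strict Implicit. Unset Printing Implicit Defensive.
Local Open Scope ring_scope.
Local Open Scope classical_set_scope.

(** * Smooth functions on coordinate space *)

Section SmoothOn.
Variables (R : realType) (N : nat).
Local Notation fn := ('rV[R]_N -> R).
Implicit Types (U : set 'rV[R]_N) (f g : fn) (p v : 'rV[R]_N) (l : seq (fn * fn)).

Definition eq_on U f g := forall p, U p -> f p = g p.

Lemma eq_on_near U f g p : open U -> U p -> eq_on U f g -> \forall x \near p, f x = g x.
Proof. by move=> oU Up fg; apply: filterS (open_nbhs_nbhs (conj oU Up)); exact: fg. Qed.

Lemma eq_on_derive U f g p v : open U -> U p -> eq_on U f g -> 'D_v f p = 'D_v g p.
Proof. by move=> oU Up /(eq_on_near oU Up) /near_eq_derive. Qed.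

Lemma eq_on_derivable U f g p v : open U -> U p -> eq_on U f g ->
  derivable f p v -> derivable g p v.
Proof. by move=> oU Up /(eq_on_near oU Up) /near_eq_derivable; apply. Qed.

Lemma eq_on_continuous U f g p : open U -> U p -> eq_on U f g ->
  {for p, continuous f} -> {for p, continuous g}.
Proof.
move=> oU Up fg cf; rewrite /prop_for /continuous_at -(fg p Up).
exact: cvg_trans (near_eq_cvg (eq_on_near oU Up fg)) cf.
Qed.

Lemma iterD_rcons es e f :
  Defs.iterD (rcons es e) f = Defs.iterD es ('D_(delta_mx ord0 e) f).
Proof. by rewrite /Defs.iterD foldr_rcons. Qed.

Lemma smooth_on_derive U f e : smooth_on U f -> smooth_on U ('D_(delta_mx ord0 e) f).
Proof. by move=> sf es p Up; rewrite -iterD_rcons; apply: sf. Qed.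

Lemma smooth_on_continuous U f p : smooth_on U f -> U p -> {for p, continuous f}.
Proof. by move=> sf Up; exact: (sf [::] p Up).1. Qed.

Lemma smooth_on_derivable U f p e : smooth_on U f -> U p ->
  derivable f p (delta_mx ord0 e).
Proof. by move=> sf Up; exact: (sf [::] p Up).2. Qed.

(* Smoothness is proved by exhibiting a family stable under partial
   derivatives up to equality on U, which avoids computing iterated
   derivatives. *)
Definition derive_stable U (F : fn -> Prop) :=
  (forall f p, F f -> U p ->
     {for p, continuous f} /\ forall e, derivable f p (delta_mx ord0 e)) /\
  (forall f e, F f -> exists2 g, F g & eq_on U ('D_(delta_mx ord0 e) f) g).

Lemma derive_stable_smooth U F f : open U -> derive_stable U F -> F f ->
  smooth_on U f.
Proof.
move=> oU [regF DF] Ff es p Up.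
have [g Fg fg] : exists2 g, F g & eq_on U (Defs.iterD es f) g.
  elim: es => [|e es [g Fg fg]]; first by exists f.
  have [g' Fg' gg'] := DF g e Fg.
  by exists g' => // x Ux; rewrite -gg' //; exact: eq_on_derive fg.
have gf : eq_on U g (Defs.iterD es f) by move=> x Ux; rewrite fg.
have [cg dg] := regF g p Fg Up.
by split=> [|e]; [exact: eq_on_continuous gf cg | exact: eq_on_derivable gf (dg e)].
Qed.

Lemma smooth_on_cst U c : open U -> smooth_on U (fun=> c).
Proof.
move=> oU; apply: (derive_stable_smooth (F := fun f => exists c', f = fun=> c')) => //;
  last by exists c.
split=> [f p [c' ->] _ | f e [c' ->]].
  by split=> [|e]; [exact: cst_continuous | exact: derivable_cst].
by exists (fun=> 0); [exists 0 | move=> p _; rewrite derive_cst].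
Qed.

Lemma is_derive_coord p v k : is_derive p v (fun x : 'rV[R]_N => x ord0 k) (v ord0 k).
Proof.
have dM := @derivable_id _ _ p v.
have dk := (derivable_mxP (@id 'rV[R]_N) p v).1 dM ord0 k.
apply: DeriveDef => //.
by have := derive_mx dM; rewrite derive_id => /matrixP /(_ ord0 k); rewrite mxE.
Qed.

Lemma smooth_on_coord U k : open U -> smooth_on U (fun x => x ord0 k).
Proof.
move=> oU; apply: (derive_stable_smooth
   (F := fun f => (exists c, f = fun=> c) \/ f = fun x => x ord0 k)) => //; last by right.
split=> [f p [[c ->]|->] _ | f e [[c ->]|->]].
- by split=> [|e]; [exact: cst_continuous | exact: derivable_cst].
- split=> [|e]; first exact: coord_continuous.
  by case: (is_derive_coord p (delta_mx ord0 e) k).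
- by exists (fun=> 0); [left; exists 0 | move=> p _; rewrite derive_cst].
- exists (fun=> (delta_mx ord0 e : 'rV[R]_N) ord0 k); first by left; eexists.
  by move=> p _; case: (is_derive_coord p (delta_mx ord0 e) k).
Qed.

Lemma is_derive_sum_seq (I : eqType) (r : seq I) (F : I -> fn)
    (dF : I -> R) p v :
  (forall i, i \in r -> is_derive p v (F i) (dF i)) ->
  is_derive p v (fun x => \sum_(i <- r) F i x) (\sum_(i <- r) dF i).
Proof.
move=> dFi; rewrite -fct_sumE big_seq [X in is_derive _ _ _ X]big_seq.
elim/big_rec2: _ => [|i d f ir df]; first exact: is_derive_cst.
exact: is_deriveD (dFi i ir) df.
Qed.

Lemma smooth_on_sum_prod U l :
  open U -> (forall fg, fg \in l -> smooth_on U fg.1 /\ smooth_on U fg.2) ->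
  smooth_on U (fun x => \sum_(fg <- l) fg.1 x * fg.2 x).
Proof.
pose SP l : fn := fun x => \sum_(fg <- l) fg.1 x * fg.2 x.
pose smooth_pairs l := forall fg, fg \in l -> smooth_on U fg.1 /\ smooth_on U fg.2.
have dSP l' p e : smooth_pairs l' -> U p ->
    is_derive p (delta_mx ord0 e) (SP l')
      (\sum_(fg <- l') ('D_(delta_mx ord0 e) fg.1 p * fg.2 p +
                       fg.1 p * 'D_(delta_mx ord0 e) fg.2 p)).
  move=> sl' Up; apply: is_derive_sum_seq => fg /sl'[s1 s2].
  have := is_deriveM (derivableP (smooth_on_derivable (e := e) s1 Up))
                     (derivableP (smooth_on_derivable (e := e) s2 Up)).
  by move/is_derive_eq; apply; rewrite addrC /GRing.scale /= [fg.2 p * _]mulrC.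
move=> oU sl; apply: (derive_stable_smooth
  (F := fun f => exists2 l, smooth_pairs l & eq_on U f (SP l))) => //; last by exists l.
split=> [f p [l' sl' fl'] Up | f e [l' sl' fl']].
  have gf : eq_on U (SP l') f by move=> x Ux; rewrite fl'.
  split=> [|e]; last by apply: eq_on_derivable gf _; case: (dSP l' p e sl' Up).
  apply: eq_on_continuous gf _ => //; rewrite /SP -fct_sumE big_seq.
  elim/big_rec: _ => [|fg h /sl'[s1 s2] ch]; first exact: cst_continuous.
  apply: continuousD ch.
  exact: continuousM (smooth_on_continuous s1 Up) (smooth_on_continuous s2 Up).
pose l'' := [seq ('D_(delta_mx ord0 e) fg.1, fg.2) | fg <- l'] ++
            [seq (fg.1, 'D_(delta_mx ord0 e) fg.2) | fg <- l'].
exists (SP l'').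
  exists l'' => // fg; rewrite mem_cat => /orP[] /mapP[fg' /sl'[s1 s2] ->] /=.
  - by split; [exact: smooth_on_derive | exact: s2].
  - by split; [exact: s1 | exact: smooth_on_derive].
move=> p Up; rewrite (eq_on_derive _ oU Up fl'); have [_ ->] := dSP l' p e sl' Up.
by rewrite /SP big_cat !big_map big_split.
Qed.

Lemma smooth_on_mul U f g : open U -> smooth_on U f -> smooth_on U g ->
  smooth_on U (fun x => f x * g x).
Proof.
move=> oU sf sg; have := @smooth_on_sum_prod U [:: (f, g)] oU.
rewrite (_ : (fun x => _) = fun x => f x * g x); last by apply/funext => x; rewrite big_seq1.
by apply=> fg; rewrite inE => /eqP ->.
Qed.

Lemma smooth_on_add U f g : open U -> smooth_on U f -> smooth_on U g ->
  smooth_on U (fun x => f x + g x).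
Proof.
move=> oU sf sg; have := @smooth_on_sum_prod U [:: (f, fun=> 1); (g, fun=> 1)] oU.
rewrite (_ : (fun x => \sum_(fg <- _) _) = fun x => f x + g x); last first.
  by apply/funext => x; rewrite big_cons big_seq1 !mulr1.
have s1 := smooth_on_cst 1 oU.
by apply=> fg; rewrite !inE => /orP[] /eqP ->.
Qed.

Lemma smooth_on_sum U (I : Type) (r : seq I) (F : I -> fn) : open U ->
  (forall i, smooth_on U (F i)) -> smooth_on U (fun x => \sum_(i <- r) F i x).
Proof.
move=> oU sF; elim: r => [|i r IHr].
  rewrite (_ : (fun x => _) = fun=> 0); first exact: smooth_on_cst.
  by apply/funext => x; rewrite big_nil.
rewrite (_ : (fun x => _) = fun x => F i x + \sum_(j <- r) F j x); first exact: smooth_on_add.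
by apply/funext => x; rewrite big_cons.
Qed.

Lemma smooth_on_prod U (I : Type) (r : seq I) (F : I -> fn) : open U ->
  (forall i, smooth_on U (F i)) -> smooth_on U (fun x => \prod_(i <- r) F i x).
Proof.
move=> oU sF; elim: r => [|i r IHr].
  rewrite (_ : (fun x => _) = fun=> 1); first exact: smooth_on_cst.
  by apply/funext => x; rewrite big_nil.
rewrite (_ : (fun x => _) = fun x => F i x * \prod_(j <- r) F j x); first exact: smooth_on_mul.
by apply/funext => x; rewrite big_cons.
Qed.

Lemma is_derive_mull c f p v d : is_derive p v f d ->
  is_derive p v (fun x => c * f x) (c * d).
Proof. exact: is_deriveZ. Qed.

Lemma is_derive_line_cst f p v : (forall h : R, f (h *: v + p) = f p) ->
  is_derive p v f 0.
Proof.
move=> fcst; have E : (fun h : R => h^-1 *: ((f \o shift p) (h *: v) - f p)) = fun=> 0.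
  by apply/funext => h; rewrite /= fcst subrr scaler0.
have dfv : derivable f p v by rewrite /derivable E; exact: is_cvg_cst.
by apply: (DeriveDef dfv); rewrite /derive E lim_cst.
Qed.

Lemma is_derive_mul_line_cst f g p v d : is_derive p v f d ->
  (forall h : R, g (h *: v + p) = g p) -> is_derive p v (fun x => f x * g x) (d * g p).
Proof.
move=> df /is_derive_line_cst dg.
have := is_deriveM df dg; rewrite scaler0 add0r => /is_derive_eq; apply.
by rewrite /GRing.scale /= mulrC.
Qed.

End SmoothOn.

Section LinearPullback.
Variables (R : realType) (N M : nat) (L : 'rV[R]_N -> 'rV[R]_M).
Hypothesis L_linear : linear L.

Let difference_quotient_comp (g : 'rV[R]_M -> R) p v :
  (fun h : R => h^-1 *: ((g \o L \o shift p) (h *: v) - (g \o L) p)) =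
  (fun h : R => h^-1 *: ((g \o shift (L p)) (h *: L v) - g (L p))).
Proof. by apply/funext => h /=; rewrite (L_linear h v p). Qed.

Lemma derive_comp_linear (g : 'rV[R]_M -> R) p v :
  'D_v (g \o L) p = 'D_(L v) g (L p).
Proof. by rewrite /derive difference_quotient_comp. Qed.

Lemma derivable_comp_linear (g : 'rV[R]_M -> R) p v :
  derivable (g \o L) p v <-> derivable g (L p) (L v).
Proof. by rewrite /derivable difference_quotient_comp. Qed.

Hypothesis L_continuous : continuous L.
Hypothesis L_basis : forall e, L (delta_mx ord0 e) = 0 \/
  exists e', L (delta_mx ord0 e) = delta_mx ord0 e'.

Lemma smooth_on_comp_linear (U : set 'rV[R]_N) (U' : set 'rV[R]_M) g :
  open U -> (forall p, U p -> U' (L p)) -> smooth_on U' g -> smooth_on U (g \o L).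
Proof.
move=> oU LU sg; apply: (derive_stable_smooth
  (F := fun f => (exists2 g, smooth_on U' g & f = g \o L) \/ f = fun=> 0)) => //;
  last by left; exists g.
split=> [f p [[g' sg' ->]|->] Up | f e [[g' sg' ->]|->]].
- split=> [|e].
    by apply: continuous_comp; [exact: L_continuous | exact: smooth_on_continuous sg' (LU p Up)].
  apply/derivable_comp_linear; have [->|[e' ->]] := L_basis e; first exact: derivable0.
  exact: smooth_on_derivable sg' (LU p Up).
- by split=> [|e]; [exact: cst_continuous | exact: derivable_cst].
- have [Le0|[e' Le]] := L_basis e.
    by exists (fun=> 0); [right | move=> p _; rewrite derive_comp_linear Le0 derive0].
  exists ('D_(delta_mx ord0 e') g' \o L).
    by left; exists ('D_(delta_mx ord0 e') g') => //; exact: smooth_on_derive.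
  by move=> p _; rewrite derive_comp_linear Le.
- by exists (fun=> 0); [right | move=> p _; rewrite derive_cst].
Qed.

End LinearPullback.

(** * Jet coordinates *)

Lemma row_sub_norm_le (R : realType) N M (f : 'I_M -> 'I_N) (v : 'rV[R]_N) :
  `|\row_j v ord0 (f j)| <= `|v|.
Proof.
have := normr_ge0 v; rewrite /Num.Def.normr /= !mx_normrE => v_ge0.
apply: bigmax_le => // -[i j] _ /=.
by rewrite mxE; apply: le_trans (le_bigmax _ _ (ord0, f j)).
Qed.

Lemma row_sub_continuous (R : realType) N M (f : 'I_M -> 'I_N) :
  continuous (fun p : 'rV[R]_N => \row_j p ord0 (f j)).
Proof.
move=> p s /= /nbhs_ballP[e e0 es]; apply/nbhs_ballP; exists e => //= x px.
apply: es; move: px; rewrite !mx_norm_ball /ball_ /=; apply: le_lt_trans.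
have -> : \row_j p ord0 (f j) - \row_j x ord0 (f j) = \row_j (p - x) ord0 (f j).
  by apply/rowP => j; rewrite !mxE.
exact: row_sub_norm_le.
Qed.

Section JetCoordinates.
Variables (n m : nat).

Lemma sum_count_mem (J : seq 'I_n) : (\sum_(l < n) count_mem l J)%N = size J.
Proof.
elim: J => [|x J IH] /=; first by rewrite big1.
rewrite big_split /= IH (bigD1 x) //= eqxx big1 ?addn0 // => l.
by rewrite eq_sym => /negbTE ->.
Qed.

Lemma mi_ofE k (J : seq 'I_n) l : (size J <= k)%N ->
  (val (mi_of k J) l : nat) = count_mem l J.
Proof.
have cnt_le i : (count_mem i J <= size J)%N.
  by rewrite -sum_count_mem (bigD1 i) //= leq_addr.
move=> sJ; have cnt_lt i : (count_mem i J < k.+1)%N by rewrite ltnS (leq_trans (cnt_le i)).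
rewrite /mi_of insubdK ?ffunE ?inordK // unfold_in /=.
by rewrite (eq_bigr (fun l => count_mem l J)) ?sum_count_mem // => i _; rewrite ffunE inordK.
Qed.

Lemma mi_of_perm k (J J' : seq 'I_n) : perm_eq J J' -> mi_of k J = mi_of k J'.
Proof.
by move=> /seq.permP pJ; rewrite /mi_of; congr insubd; apply/ffunP => l; rewrite !ffunE pJ.
Qed.

Lemma mi_of_size k (J J' : seq 'I_n) : (size J <= k)%N -> (size J' <= k)%N ->
  mi_of k J = mi_of k J' -> size J = size J'.
Proof.
move=> sJ sJ' E; rewrite -!sum_count_mem.
by apply: eq_bigr => l _; rewrite -(mi_ofE l sJ) -(mi_ofE l sJ') E.
Qed.

Lemma emb_miE k l (a : mi n k) i : (k <= l)%N -> (val (emb_mi l a) i : nat) = val a i.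
Proof.
move=> kl; have lt_l j : (val a j < l.+1)%N by rewrite (leq_trans (ltn_ord _)) ?ltnS.
rewrite /emb_mi insubdK ?ffunE ?inordK // unfold_in /=.
rewrite (eq_bigr (fun j => nat_of_ord (val a j))) ?(leq_trans (valP a)) // => j _.
by rewrite ffunE inordK.
Qed.

Lemma emb_mi_inj k l : (k <= l)%N -> injective (@emb_mi n k l).
Proof.
move=> kl a b E; apply: val_inj; apply/ffunP => i.
apply: val_inj; change (nat_of_ord (val a i) = nat_of_ord (val b i)).
by rewrite -(emb_miE a i kl) -(emb_miE b i kl) E.
Qed.

Lemma emb_mi_of k l (J : seq 'I_n) : (size J <= k)%N -> (k <= l)%N ->
  emb_mi l (mi_of k J) = mi_of l J.
Proof.
move=> sJ kl; apply: val_inj; apply/ffunP => i; apply: val_inj => /=.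
by rewrite (emb_miE _ _ kl) !mi_ofE // (leq_trans sJ).
Qed.

Lemma emb_mi_trans k l L (a : mi n k) : (k <= l)%N -> (l <= L)%N ->
  emb_mi L (emb_mi l a) = emb_mi L a.
Proof.
move=> kl lL; apply: val_inj; apply/ffunP => i; apply: val_inj => /=.
by rewrite !emb_miE // (leq_trans kl).
Qed.

Lemma emb_inj k l : (k <= l)%N -> injective (@emb n m k l).
Proof.
move=> kl [i|[s a]] [i'|[s' a']] //=; first by case=> ->.
by case=> -> /(emb_mi_inj kl) ->.
Qed.

Lemma emb_trans k l L (c : Defs.coord n m k) : (k <= l)%N -> (l <= L)%N ->
  emb L (emb l c) = emb L c.
Proof. by move=> kl lL; case: c => [i|[s a]] //=; rewrite emb_mi_trans. Qed.

Lemma emb_yc k l (a : 'I_m) (J : seq 'I_n) : (size J <= k)%N -> (k <= l)%N ->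
  emb l (yc k a J) = yc l a J.
Proof. by move=> sJ kl; rewrite /yc /= emb_mi_of. Qed.

Lemma yc_neq k (a a' : 'I_m) (J J' : seq 'I_n) : (size J < k)%N -> size J' = k ->
  yc k a J != yc k a' J'.
Proof.
move=> sJ sJ'; apply/eqP => -[_ /(mi_of_size (ltnW sJ) (eq_leq sJ'))].
by move: sJ => /[swap] ->; rewrite sJ' ltnn.
Qed.

Variable R : realType.

Lemma cv_projk k l (p : pt R n m l) (c : Defs.coord n m k) : cv (projk k p) c = cv p (emb l c).
Proof. by rewrite /cv /projk mxE enum_rankK. Qed.

Lemma projk_linear k l : linear (@projk R n m k l).
Proof. by move=> a x y; apply/rowP => j; rewrite !mxE /cv !mxE. Qed.

Lemma projk_trans k l L (p : pt R n m L) : (k <= l)%N -> (l <= L)%N ->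
  projk k (projk l p) = projk k p.
Proof. by move=> kl lL; apply/rowP => j; rewrite !mxE cv_projk emb_trans. Qed.

Lemma projk_ev k l (c : Defs.coord n m k) : (k <= l)%N -> projk k (ev R (emb l c)) = ev R c.
Proof.
move=> kl; apply/rowP => j; rewrite !mxE /cv /ev !mxE /=; congr (nat_of_bool _)%:R.
apply/idP/idP => [/eqP/enum_rank_inj/(emb_inj kl) <-|/eqP ->]; first by rewrite enum_valK.
by rewrite enum_rankK.
Qed.

Lemma projk_basis k l (e : 'I_#|{: Defs.coord n m l}|) : (k <= l)%N ->
  projk k (delta_mx ord0 e : pt R n m l) = 0 \/
  exists e', projk k (delta_mx ord0 e : pt R n m l) = delta_mx ord0 e'.
Proof.
move=> kl; case: (pickP (fun c : Defs.coord n m k => emb l c == enum_val e)) => [c /eqP E|Ne].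
  by right; exists (enum_rank c); rewrite -(enum_valK e) -E projk_ev.
left; apply/rowP => j; rewrite !mxE /cv !mxE /=.
case: eqP => // /(congr1 enum_val); rewrite enum_rankK => E.
by move: (Ne (enum_val j)); rewrite E eqxx.
Qed.

Lemma projk_continuous k l : continuous (@projk R n m k l).
Proof. exact: row_sub_continuous. Qed.

Lemma open_domk k (W : set (pt R n m 0)) : open W -> open (@domk R n m k W).
Proof. by move=> oW; exact: (continuousP _).1 (@projk_continuous 0 k) W oW. Qed.

Lemma domk_projk k l (W : set (pt R n m 0)) (p : pt R n m l) : (k <= l)%N ->
  @domk R n m l W p -> @domk R n m k W (projk k p).
Proof. by move=> kl; rewrite /domk /= projk_trans. Qed.

Lemma cv_shift k (p : pt R n m k) (c c' : Defs.coord n m k) (h : R) :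
  cv (h *: ev R c + p) c' = h * (c == c')%:R + cv p c'.
Proof. by rewrite /cv /ev !mxE /= (inj_eq enum_rank_inj) eq_sym. Qed.

End JetCoordinates.

(** * Sums over sequences *)

Section Insert.
Variable T : Type.
Implicit Types (x : T) (s : seq T).

Definition insert k x s := take k s ++ x :: drop k s.

Lemma insert0 x s : insert 0 x s = x :: s.
Proof. by rewrite /insert take0 drop0. Qed.

Lemma insertS k x y s : insert k.+1 x (y :: s) = y :: insert k x s.
Proof. by []. Qed.

Lemma size_insert k x s : (k <= size s)%N -> size (insert k x s) = (size s).+1.
Proof. by move=> ks; rewrite /insert size_cat /= size_takel // size_drop addnS subnKC. Qed.

Lemma nth_insert x0 k x s : (k <= size s)%N -> nth x0 (insert k x s) k = x.
Proof. by move=> ks; rewrite /insert nth_cat size_takel // ltnn subnn. Qed.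

Lemma dropi_insert k x s : (k <= size s)%N -> dropi k (insert k x s) = s.
Proof.
move=> ks; rewrite /dropi /insert take_cat drop_cat size_takel // ltnn subnn take0.
by rewrite ltnNge leqnSn /= subSn // subnn /= drop0 cats0 cat_take_drop.
Qed.

End Insert.

Lemma map_insert (T T' : Type) (f : T -> T') k x s :
  map f (insert k x s) = insert k (f x) (map f s).
Proof. by rewrite /insert map_cat /= map_take map_drop. Qed.

Lemma zip_insert (T1 T2 : Type) k (x1 : T1) (x2 : T2) s1 s2 : size s1 = size s2 ->
  zip (insert k x1 s1) (insert k x2 s2) = insert k (x1, x2) (zip s1 s2).
Proof.
elim: s1 k s2 => [|y1 s1 IH] [|k] [|y2 s2] //= [s12].
by rewrite !insertS /= IH.
Qed.

Lemma perm_insert (T : eqType) k (x : T) s : perm_eq (insert k x s) (x :: s).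
Proof. by rewrite /insert -cat1s perm_catCA /= cat_take_drop. Qed.

Section SumSeqs.
Variable R : pzSemiRingType.

(* Unlike a sum over N-tuples, [sum_seqs N G] can be reindexed by inserting
   the summation variable of an outer sum at any position. *)
Fixpoint sum_seqs (T : finType) N (G : seq T -> R) : R :=
  if N is N'.+1 then \sum_(x : T) sum_seqs N' (fun t => G (x :: t)) else G [::].

Variable T : finType.
Implicit Types (G : seq T -> R).

Lemma sum_seqsE N G : \sum_(t : N.-tuple T) G t = sum_seqs N G.
Proof.
elim: N G => [|N IH] G /=.
  by rewrite (eq_bigr (fun=> G [::])) => [|t _]; rewrite ?tuple0 // sumr_const card_tuple.
rewrite -(eq_bigr _ (fun x _ => IH (fun t => G (x :: t)))) pair_big /=.
rewrite (reindex (fun p : T * N.-tuple T => [tuple of p.1 :: p.2])) //=.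
exists (fun t : N.+1.-tuple T => (thead t, [tuple of behead t])) => [[x t] _|t _].
  by rewrite theadE; congr pair; apply: val_inj.
by rewrite [t in RHS]tuple_eta.
Qed.

Lemma eq_sum_seqs N G G' : (forall t, size t = N -> G t = G' t) ->
  sum_seqs N G = sum_seqs N G'.
Proof.
elim: N G G' => [|N IH] G G' eqG /=; first exact: eqG.
by apply: eq_bigr => x _; apply: IH => t st; apply: eqG; rewrite /= st.
Qed.

Lemma sum_seqs0 N : sum_seqs N (fun _ : seq T => 0 : R) = 0.
Proof. by elim: N => //= N IH; rewrite big1. Qed.

Lemma sum_seqsD N G G' :
  sum_seqs N (fun t => G t + G' t) = sum_seqs N G + sum_seqs N G'.
Proof.
elim: N G G' => [|N IH] G G' //=.
by rewrite -big_split /=; apply: eq_bigr => x _; rewrite IH.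
Qed.

Lemma sum_seqs_sum (I : Type) (r : seq I) N (F : I -> seq T -> R) :
  sum_seqs N (fun t => \sum_(i <- r) F i t) = \sum_(i <- r) sum_seqs N (F i).
Proof.
elim: r => [|i r IH].
  by rewrite big_nil -[RHS](sum_seqs0 N); apply: eq_sum_seqs => t _; rewrite big_nil.
by rewrite big_cons -IH -sum_seqsD; apply: eq_sum_seqs => t _; rewrite big_cons.
Qed.

Lemma sum_seqs_mull N c G : sum_seqs N (fun t => c * G t) = c * sum_seqs N G.
Proof.
elim: N G => [|N IH] G //=.
by rewrite mulr_sumr; apply: eq_bigr => x _; rewrite IH.
Qed.

Lemma sum_seqs_insert k N G : (k <= N)%N ->
  sum_seqs N.+1 G = \sum_(x : T) sum_seqs N (fun t => G (insert k x t)).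
Proof.
elim: k N G => [|k IH] N G kN.
  by apply: eq_bigr => x _; apply: eq_sum_seqs => t _; rewrite insert0.
case: N kN => // N kN.
transitivity (\sum_(x : T) sum_seqs N.+1 (fun t => G (x :: t))); first by [].
under eq_bigr => x _ do rewrite (IH N (fun t => G (x :: t))) //.
by rewrite exchange_big.
Qed.

Lemma big_zip_iota (X : Type) (x0 : X) (F : nat * X -> R) m (s : seq X) :
  \sum_(u <- zip (iota m (size s)) s) F u = \sum_(k < size s) F (m + k, nth x0 s k)%N.
Proof.
elim: s m => [|x s IH] m /=; first by rewrite big_nil big_ord0.
rewrite big_cons big_ord_recl /= addn0 IH.
by congr (_ + _); apply: eq_bigr => k _; rewrite addSnnS.
Qed.

Lemma sum_seqs_positions N (H : nat -> T -> seq T -> R) :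
  sum_seqs N.+1 (fun s => \sum_(u <- zip (iota 0 (size s)) s) H u.1 u.2 s) =
  \sum_(k < N.+1) \sum_(x : T) sum_seqs N (fun s => H k x (insert k x s)).
Proof.
have [x0 _|T0] := pickP (@predT T); last first.
  have sumT0 (F : T -> R) : \sum_(x : T) F x = 0 by rewrite big1 // => x; have := T0 x.
  by rewrite /= sumT0 big1 // => k _; exact: sumT0.
rewrite (eq_sum_seqs (G' := fun s => \sum_(k < N.+1) H k (nth x0 s k) s)); last first.
  by move=> s sz; rewrite (big_zip_iota x0) sz.
rewrite sum_seqs_sum; apply: eq_bigr => k _; have kN : (k <= N)%N by rewrite -ltnS.
rewrite (sum_seqs_insert (k := k)) //.
by apply: eq_bigr => x _; apply: eq_sum_seqs => s sz; rewrite nth_insert ?sz.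
Qed.

End SumSeqs.

Lemma sum_seqs2_positions (R : pzSemiRingType) (T1 T2 : finType) N
    (H : nat -> T1 -> T2 -> seq T1 -> seq T2 -> R) :
  sum_seqs N.+1 (fun s1 => sum_seqs N.+1 (fun s2 =>
    \sum_(u <- zip (iota 0 (size s1)) (zip s1 s2)) H u.1 u.2.1 u.2.2 s1 s2)) =
  \sum_(k < N.+1) \sum_(x1 : T1) sum_seqs N (fun s1 => \sum_(x2 : T2) sum_seqs N (fun s2 =>
    H k x1 x2 (insert k x1 s1) (insert k x2 s2))).
Proof.
have [x1 _|T0] := pickP (@predT T1); last first.
  have sumT0 (F : T1 -> R) : \sum_(x : T1) F x = 0 by rewrite big1 // => x; have := T0 x.
  by rewrite /= sumT0 big1 // => k _; exact: sumT0.
have [x2 _|T0] := pickP (@predT T2); last first.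
  have sumT0 (F : T2 -> R) : \sum_(x : T2) F x = 0 by rewrite big1 // => x; have := T0 x.
  have sum_seqsT0 M (G : seq T1 -> T2 -> R) :
      sum_seqs M (fun s1 => \sum_(x2 : T2) G s1 x2) = 0.
    by rewrite (eq_sum_seqs (G' := fun=> 0)) ?sum_seqs0 // => s _; exact: sumT0.
  rewrite big1 => [|k _]; last by rewrite big1 // => x _; exact: sum_seqsT0.
  by rewrite -[RHS](@sum_seqs0 R T1 N.+1); apply: eq_sum_seqs => s _ /=; exact: sumT0.
rewrite (eq_sum_seqs (G' := fun s1 => \sum_(k < N.+1) sum_seqs N.+1 (fun s2 =>
    H k (nth x1 s1 k) (nth x2 s2 k) s1 s2))); last first.
  move=> s1 sz1; rewrite -sum_seqs_sum; apply: eq_sum_seqs => s2 sz2.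
  have sz : size (zip s1 s2) = N.+1 by rewrite size_zip sz1 sz2 minnn.
  have := big_zip_iota (x1, x2) (fun u => H u.1 u.2.1 u.2.2 s1 s2) 0 (zip s1 s2).
  rewrite sz sz1 => ->; apply: eq_bigr => k _.
  by rewrite nth_zip ?sz1 ?sz2.
rewrite sum_seqs_sum; apply: eq_bigr => k _; have kN : (k <= N)%N by rewrite -ltnS.
rewrite (sum_seqs_insert (k := k)) //; apply: eq_bigr => y1 _; apply: eq_sum_seqs => s1 sz1.
rewrite (sum_seqs_insert (k := k)) //; apply: eq_bigr => y2 _; apply: eq_sum_seqs => s2 sz2.
by rewrite !nth_insert ?sz1 ?sz2.
Qed.

(** * Hyper-Jacobians *)

Section LeviCivita.
Variables (R : realType) (n : nat).
Implicit Types (t : seq 'I_n).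

Lemma eps_size t : size t != n -> eps R t = 0.
Proof.
move=> st; rewrite /eps big1 // => P _; case: eqP => [E|_]; last by rewrite mul0r.
by move: st; rewrite -E size_map size_enum_ord eqxx.
Qed.

(* Swapping two adjacent entries of t amounts to composing the permutations
   in the definition of eps with the transposition of the positions. *)
Lemma eps_swap l1 (x y : 'I_n) l2 :
  eps R (l1 ++ x :: y :: l2) = - eps R (l1 ++ y :: x :: l2).
Proof.
have [sE|sN] := eqVneq (size (l1 ++ x :: y :: l2)) n; last first.
  by rewrite !eps_size ?oppr0 //; move: sN; rewrite !size_cat.
set k := size l1.
have kn : (k.+1 < n)%N by rewrite -sE size_cat /= !addnS !ltnS leq_addr.
pose a := Ordinal (ltnW kn); pose b := Ordinal kn; pose tau := tperm a b.
have ab : a != b by rewrite -val_eqE /= (ltn_eqF (ltnSn k)).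
set e := enum 'I_n; have se : size e = n by rewrite size_enum_ord.
have e_split : e = take k e ++ a :: b :: drop k.+2 e.
  rewrite -{1}(cat_take_drop k e) (drop_nth a) ?se ?(ltnW kn) // (drop_nth a) ?se //.
  by rewrite (nth_ord_enum a a) (nth_ord_enum a b).
have := enum_uniq 'I_n; rewrite -/e e_split cat_uniq /= => /and3P[_ + /and3P[+ bD _]].
rewrite inE !negb_or => /and3P[aT bT _] /andP[_ aD].
have tau_id (s : seq 'I_n) : a \notin s -> b \notin s -> map tau s = s.
  by move=> aS bS; apply: map_id_in => z zs; rewrite tpermD //;
    [apply: contraNneq aS => -> | apply: contraNneq bS => ->].
have mapP_split (P : 'S_n) :
  map P e = map P (take k e) ++ P a :: P b :: map P (drop k.+2 e).
  by rewrite {1}e_split map_cat.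
have mapPtau (P : 'S_n) :
  map (tau * P)%g e = map P (take k e) ++ P b :: P a :: map P (drop k.+2 e).
  rewrite (eq_map (g := P \o tau)) => [|i]; last by rewrite /= permM.
  rewrite map_comp {1}e_split map_cat /= !tau_id // /tau tpermL tpermR.
  by rewrite map_cat.
have sT (P : 'S_n) : size (map P (take k e)) = k.
  by rewrite size_map size_takel // se; exact: ltnW (ltnW kn).
rewrite /eps (reindex_inj (mulgI tau)) /= -sumrN; apply: eq_bigr => P _.
rewrite odd_permM odd_tperm ab signr_addb /= mapPtau mapP_split.
rewrite !eqseq_cat ?sT // !eqseq_cons [X in _ && X]andbCA.
by rewrite expr1 mulN1r mulrN.
Qed.

Lemma eps_cat_cons l1 (x : 'I_n) l2 :
  eps R (l1 ++ x :: l2) = (-1) ^+ size l1 * eps R (x :: l1 ++ l2).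
Proof.
elim/last_ind: l1 l2 => [|l y IH] l2; first by rewrite mul1r.
by rewrite !cat_rcons eps_swap IH size_rcons exprS mulN1r mulNr.
Qed.

Lemma eps_cat_insert t k (j : 'I_n) i : (k <= size i)%N ->
  eps R (t ++ insert k j i) = (-1) ^+ (size t + k) * eps R (j :: t ++ i).
Proof.
move=> ki; rewrite /insert catA eps_cat_cons size_cat size_takel //.
by rewrite -catA cat_take_drop.
Qed.

Lemma eps_insert_cat t k (j : 'I_n) i : (k <= size t)%N ->
  eps R (insert k j t ++ i) = (-1) ^+ k * eps R (j :: t ++ i).
Proof.
move=> kt; rewrite /insert -catA /= eps_cat_cons size_takel //.
by rewrite catA cat_take_drop.
Qed.

End LeviCivita.

Lemma zip_mapr (S T T' : Type) (f : T -> T') (s : seq S) (t : seq T) :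
  zip s (map f t) = map (fun u => (u.1, f u.2)) (zip s t).
Proof. by elim: s t => [|x s IH] [|y t] //=; rewrite IH. Qed.

Lemma zip_mapl (S S' T : Type) (f : S -> S') (s : seq S) (t : seq T) :
  zip (map f s) t = map (fun u => (f u.1, u.2)) (zip s t).
Proof. by elim: s t => [|x s IH] [|y t] //=; rewrite IH. Qed.

Lemma dropi_map (T T' : Type) (f : T -> T') k (s : seq T) :
  dropi k (map f s) = map f (dropi k s).
Proof. by rewrite /dropi map_cat map_take map_drop. Qed.

Section HyperJacobianExpansion.
Variables (R : realType) (n m : nat) (Y : 'I_m -> seq 'I_n -> R).
Implicit Types (sg : seq 'I_m) (I : seq (seq 'I_n)) (i t : seq 'I_n).

Definition hjac_cols sg I t : R := \prod_(u <- zip sg (zip I t)) Y u.1 (rcons u.2.1 u.2.2).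

(* [hjacY sg I i] is [hjac sg I i] with the jet coordinates y^a_J replaced by
   [Y a J]; [hjacY_cons j] has the extra upper index [j] in front. *)
Definition hjacY sg I i : R :=
  \sum_(t : (size sg).-tuple 'I_n) eps R (t ++ i) * hjac_cols sg I t.

Definition hjacY_cons (j : 'I_n) sg I i : R :=
  \sum_(t : (size sg).-tuple 'I_n) eps R (j :: t ++ i) * hjac_cols sg I t.

Lemma hjacYE sg I i :
  hjacY sg I i = sum_seqs (size sg) (fun t => eps R (t ++ i) * hjac_cols sg I t).
Proof. exact: sum_seqsE. Qed.

Lemma hjacY_consE j sg I i :
  hjacY_cons j sg I i = sum_seqs (size sg) (fun t => eps R (j :: t ++ i) * hjac_cols sg I t).
Proof. exact: sum_seqsE. Qed.

Lemma hjac_cols_insert k sg I t a J b : size sg = size I -> size I = size t ->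
  hjac_cols (insert k a sg) (insert k J I) (insert k b t) = Y a (rcons J b) * hjac_cols sg I t.
Proof.
move=> sgI It; rewrite /hjac_cols (zip_insert _ _ _ It) zip_insert; last first.
  by rewrite size_zip -It minnn.
by rewrite (perm_big _ (perm_insert _ _ _)) big_cons.
Qed.

Lemma hjacY_insert_free sg I k j i : (k <= size i)%N ->
  hjacY sg I (insert k j i) = (-1) ^+ (size sg + k) * hjacY_cons j sg I i.
Proof.
move=> ki; rewrite /hjacY /hjacY_cons mulr_sumr; apply: eq_bigr => t _.
by rewrite eps_cat_insert // size_tuple mulrA.
Qed.

Lemma sum_free_index_terms sg I N (F : 'I_n -> seq 'I_n -> R) :
  sum_seqs N.+1 (fun i =>
    (\sum_(u <- zip (iota 0 (size i)) i) (-1) ^+ (size sg + u.1) * F u.2 (dropi u.1 i)) *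
    hjacY sg I i) =
  N.+1%:R * sum_seqs N (fun i => \sum_(j < n) F j i * hjacY_cons j sg I i).
Proof.
rewrite (eq_sum_seqs (G' := fun i => \sum_(u <- zip (iota 0 (size i)) i)
   (-1) ^+ (size sg + u.1) * F u.2 (dropi u.1 i) * hjacY sg I i)); last first.
  by move=> i _; rewrite big_distrl.
rewrite (sum_seqs_positions N (fun k j i =>
  (-1) ^+ (size sg + k) * F j (dropi k i) * hjacY sg I i)).
rewrite mulr_natl -[in RHS](card_ord N.+1) -sumr_const; apply: eq_bigr => k _.
rewrite sum_seqs_sum; apply: eq_bigr => j _; apply: eq_sum_seqs => i si.
have ki : (k <= size i)%N by rewrite si -ltnS.
by rewrite dropi_insert // hjacY_insert_free // mulrCA -mulrA signrMK.
Qed.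

Hypothesis Y_sym : forall a J j, Y a (rcons J j) = Y a (j :: J).

Lemma hjacY_insert_col k a J sg I i : size sg = size I -> (k <= size sg)%N ->
  hjacY (insert k a sg) (insert k J I) i =
  (-1) ^+ k * \sum_(j < n) Y a (j :: J) * hjacY_cons j sg I i.
Proof.
move=> sgI ks; rewrite hjacYE size_insert // (sum_seqs_insert (k := k)) // mulr_sumr.
apply: eq_bigr => b _; rewrite hjacY_consE -!sum_seqs_mull; apply: eq_sum_seqs => t st.
rewrite eps_insert_cat ?st // hjac_cols_insert ?st // Y_sym.
by rewrite mulrCA !mulrA [_ * Y _ _]mulrC.
Qed.

Lemma sum_column_terms q s N
    (G : 'I_m -> seq 'I_n -> seq 'I_m -> seq (seq 'I_n) -> seq 'I_n -> R) :
  sum_seqs s.+1 (fun sg => sum_seqs s.+1 (fun I : seq (q.-tuple 'I_n) => sum_seqs N (fun i =>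
    (\sum_(u <- zip (iota 0 (size sg)) (zip sg (map val I)))
        (-1) ^+ u.1 * G u.2.1 u.2.2 (dropi u.1 sg) (dropi u.1 (map val I)) i) *
    hjacY sg (map val I) i))) =
  s.+1%:R * \sum_(a : 'I_m) sum_seqs s (fun sg =>
    \sum_(J : q.-tuple 'I_n) sum_seqs s (fun I : seq (q.-tuple 'I_n) => sum_seqs N (fun i =>
      G a J sg (map val I) i * \sum_(j < n) Y a (j :: J) * hjacY_cons j sg (map val I) i))).
Proof.
pose H k a (J : q.-tuple 'I_n) sg (I : seq (q.-tuple 'I_n)) := sum_seqs N (fun i =>
  (-1) ^+ k * G a J (dropi k sg) (map val (dropi k I)) i * hjacY sg (map val I) i).
rewrite (eq_sum_seqs (G' := fun sg => sum_seqs s.+1 (fun I : seq (q.-tuple 'I_n) =>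
   \sum_(u <- zip (iota 0 (size sg)) (zip sg I)) H u.1 u.2.1 u.2.2 sg I))); last first.
  move=> sg _; apply: eq_sum_seqs => I _; rewrite -sum_seqs_sum; apply: eq_sum_seqs => i _.
  by rewrite zip_mapr zip_mapr big_map big_distrl; apply: eq_bigr => u _; rewrite dropi_map.
rewrite (sum_seqs2_positions s H) mulr_natl -[in RHS](card_ord s.+1) -sumr_const.
apply: eq_bigr => k _.
have ks : (k <= s)%N by rewrite -ltnS.
apply: eq_bigr => a _; apply: eq_sum_seqs => sg ssg; apply: eq_bigr => J _.
apply: eq_sum_seqs => I sI; apply: eq_sum_seqs => i _.
rewrite !dropi_insert ?ssg ?sI // map_insert hjacY_insert_col ?size_map ?ssg ?sI //.
by rewrite mulrAC -mulrA -mulrA signrMK mulrC.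
Qed.

End HyperJacobianExpansion.

(** * The potential V^j *)

Section DivergencePotential.
Variables (R : realType) (n m q : nat).
Local Notation pt := (pt R n m).
Local Notation coef s := ((s`! * (n.-1 - s)`!)%:R^-1 : R).

Definition topY (P : pt q.+1) : 'I_m -> seq 'I_n -> R := fun a J => cv P (yc q.+1 a J).

Lemma topY_sym P a J j : topY P a (rcons J j) = topY P a (j :: J).
Proof. by rewrite /topY /yc (@mi_of_perm n q.+1 (rcons J j) (j :: J)) // perm_rcons. Qed.

Definition hjac_pair (j : 'I_n) (P : pt q.+1)
    (f : seq 'I_m -> seq (seq 'I_n) -> seq 'I_n -> R) : R :=
  \sum_(s < n) coef s * \sum_(sg : s.-tuple 'I_m) \sum_(I : s.-tuple (q.-tuple 'I_n))
    \sum_(i : (n.-1 - s).-tuple 'I_n) f sg (map val I) i * hjacY_cons (topY P) j sg (map val I) i.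

Lemma hjac_pairD j P f g :
  hjac_pair j P (fun sg I i => f sg I i + g sg I i) = hjac_pair j P f + hjac_pair j P g.
Proof.
rewrite /hjac_pair -big_split /=; apply: eq_bigr => s _; rewrite -mulrDr; congr (_ * _).
rewrite -big_split /=; apply: eq_bigr => sg _; rewrite -big_split /=; apply: eq_bigr => I _.
by rewrite -big_split /=; apply: eq_bigr => i _; rewrite mulrDl.
Qed.

Lemma hjac_pairZ j P c f :
  hjac_pair j P (fun sg I i => c * f sg I i) = c * hjac_pair j P f.
Proof.
rewrite /hjac_pair mulr_sumr; apply: eq_bigr => s _; rewrite mulrCA; congr (_ * _).
rewrite mulr_sumr; apply: eq_bigr => sg _; rewrite mulr_sumr; apply: eq_bigr => I _.
by rewrite mulr_sumr; apply: eq_bigr => i _; rewrite mulrA.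
Qed.

Lemma hjac_pair_sum j P (X : Type) (r : seq X) F :
  hjac_pair j P (fun sg I i => \sum_(x <- r) F x sg I i) = \sum_(x <- r) hjac_pair j P (F x).
Proof.
elim: r => [|x r IH].
  transitivity (hjac_pair j P (fun _ _ _ => 0 * 0)); last by rewrite hjac_pairZ mul0r big_nil.
  by congr hjac_pair; do 3!apply/funext => ?; rewrite big_nil mul0r.
rewrite big_cons -IH -hjac_pairD.
by congr hjac_pair; do 3!apply/funext => ?; rewrite big_cons.
Qed.

Definition Vfield (A : Afam R n m q) (j : 'I_n) (P : pt q.+1) : R :=
  hjac_pair j P (fun sg I i => A sg I i (projk q P)).

Lemma hjacY_cons_shift j sg (I : seq (q.-tuple 'I_n)) i (c : Defs.coord n m q.+1) h P :
  (forall a J, size J = q.+1 -> c != yc q.+1 a J) ->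
  hjacY_cons (topY (h *: ev R c + P)) j sg (map val I) i = hjacY_cons (topY P) j sg (map val I) i.
Proof.
move=> c_low; apply: eq_bigr => t _; congr (_ * _).
rewrite /hjac_cols zip_mapl zip_mapr !big_map; apply: eq_bigr => u _.
by rewrite /topY cv_shift (negbTE (c_low _ _ _)) ?mulr0 ?add0r // size_rcons size_tuple.
Qed.

Lemma smooth_on_topY_hjac (U : set (pt q.+1)) j sg I i : open U ->
  smooth_on U (fun P => hjacY_cons (topY P) j sg I i).
Proof.
move=> oU; apply: smooth_on_sum => // t; apply: smooth_on_mul => //; first exact: smooth_on_cst.
by apply: smooth_on_prod => // u; exact: smooth_on_coord.
Qed.

Variable W : set (pt 0).
Hypothesis W_open : open W.
Variable A : Afam R n m q.
Hypothesis A_smooth : forall (s : nat) (sg : s.-tuple 'I_m) (I : s.-tuple (q.-tuple 'I_n))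
  (i : (n.-1 - s).-tuple 'I_n), (s < n)%N -> smooth_on (@domk R n m q W) (A sg (map val I) i).

Lemma smooth_on_Vfield j : smooth_on (@domk R n m q.+1 W) (Vfield A j).
Proof.
have oU : open (@domk R n m q.+1 W) := open_domk W_open.
apply: smooth_on_sum => // s; apply: smooth_on_mul => //; first exact: smooth_on_cst.
apply: smooth_on_sum => // sg; apply: smooth_on_sum => // I; apply: smooth_on_sum => // i.
apply: smooth_on_mul => //; last exact: smooth_on_topY_hjac.
exact: (smooth_on_comp_linear (@projk_linear n m R q q.+1) (@projk_continuous n m R q q.+1)
  (fun e => @projk_basis n m R q q.+1 e (leqnSn q)) oU
  (fun p => @domk_projk n m R q q.+1 W p (leqnSn q))
  (A_smooth sg I i (ltn_ord s))).
Qed.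

Lemma pd_Vfield j P (c : Defs.coord n m q) : @domk R n m q.+1 W P ->
  (forall a J, size J = q.+1 -> emb q.+1 c != yc q.+1 a J) ->
  pd (emb q.+1 c) (Vfield A j) P = hjac_pair j P (fun sg I i => pd c (A sg I i) (projk q P)).
Proof.
move=> P_dom c_low; have Lc := @projk_ev n m R q q.+1 c (leqnSn q).
have dA s (sg : s.-tuple 'I_m) (I : s.-tuple (q.-tuple 'I_n)) (i : (n.-1 - s).-tuple 'I_n) :
    (s < n)%N -> is_derive P (ev R (emb q.+1 c)) (fun x => A sg (map val I) i (projk q x))
                           (pd c (A sg (map val I) i) (projk q P)).
  move=> sn; apply: DeriveDef; last by rewrite (derive_comp_linear (@projk_linear n m R q q.+1)) Lc.
  apply/(derivable_comp_linear (@projk_linear n m R q q.+1)); rewrite Lc.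
  exact: smooth_on_derivable (A_smooth sg I i sn) (domk_projk (leqnSn q) P_dom).
suff [] : is_derive P (ev R (emb q.+1 c)) (Vfield A j)
  (hjac_pair j P (fun sg I i => pd c (A sg I i) (projk q P))) by [].
apply: is_derive_sum_seq => s _; apply: is_derive_mull.
do 3!apply: is_derive_sum_seq => ? _.
apply: is_derive_mul_line_cst; first exact: dA.
by move=> h; exact: hjacY_cons_shift.
Qed.

Lemma fd_Vfield j (p : pt q.+2) : @domk R n m q.+2 W p ->
  fd j (Vfield A j) p = hjac_pair j (projk q.+1 p) (fun sg I i =>
    fd j (A sg I i) (projk q.+1 p) +
    \sum_(a : 'I_m) \sum_(J : q.-tuple 'I_n)
      topY (projk q.+1 p) a (j :: J) * pdJ a J (A sg I i) (projk q (projk q.+1 p))).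
Proof.
move=> p_dom; set P := projk q.+1 p.
have P_dom : @domk R n m q.+1 W P by apply: domk_projk.
rewrite (_ : (fun sg I i => _) = fun sg I i => pd (xc m q j) (A sg I i) (projk q P) +
  \sum_(a < q.+1) \sum_(t : 'I_m) \sum_(J : a.-tuple 'I_n)
     cv P (yc q.+1 t (j :: J)) * pdJ t J (A sg I i) (projk q P)); last first.
  by do 3!apply/funext => ?; rewrite /fd big_ord_recr /= addrA.
rewrite /fd hjac_pairD (@pd_Vfield j P (xc m q j)) // hjac_pair_sum; congr (_ + _).
apply: eq_bigr => a _; rewrite hjac_pair_sum; apply: eq_bigr => t _.
rewrite hjac_pair_sum; apply: eq_bigr => J _.
have sJ : (size J <= q)%N by rewrite size_tuple -ltnS.
rewrite hjac_pairZ cv_projk emb_yc ?size_tuple //; congr (_ * _).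
rewrite /pdJ -(emb_yc t sJ (leqnSn q)) pd_Vfield ?hjac_pairZ // => b J' sJ'.
by rewrite emb_yc //; apply: yc_neq; rewrite ?sJ' ?ltnS.
Qed.

End DivergencePotential.

(** * The Lagrangian as a divergence *)

Lemma fact_coef_free (F : numFieldType) n s : (s < n)%N ->
  ((s`! * (n - s)`!)%:R)^-1 * (n - s)%:R = ((s`! * (n.-1 - s)`!)%:R)^-1 :> F.
Proof.
move=> sn; have -> : (n - s = (n.-1 - s).+1)%N by lia.
set k := (n.-1 - s)%N; rewrite factS !natrM.
have fact_neq0 j : (j`!)%:R != 0 :> F by rewrite pnatr_eq0 -lt0n fact_gt0.
by field; rewrite !fact_neq0 /= addrC natr1 pnatr_eq0.
Qed.

Lemma fact_coef_col (F : numFieldType) n s :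
  ((s.+1`! * (n - s.+1)`!)%:R)^-1 * s.+1%:R = ((s`! * (n.-1 - s)`!)%:R)^-1 :> F.
Proof.
have -> : (n - s.+1 = n.-1 - s)%N by lia.
rewrite factS !natrM.
have fact_neq0 j : (j`!)%:R != 0 :> F by rewrite pnatr_eq0 -lt0n fact_gt0.
by field; rewrite !fact_neq0 /= addrC natr1 pnatr_eq0.
Qed.

Lemma sum_tuples3E (R : pzSemiRingType) n m q s N
    (F : seq 'I_m -> seq (seq 'I_n) -> seq 'I_n -> R) :
  \sum_(sg : s.-tuple 'I_m) \sum_(I : s.-tuple (q.-tuple 'I_n)) \sum_(i : N.-tuple 'I_n)
    F sg (map val I) i =
  sum_seqs s (fun sg => sum_seqs s (fun I : seq (q.-tuple 'I_n) =>
    sum_seqs N (fun i => F sg (map val I) i))).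
Proof.
rewrite -sum_seqsE; apply: eq_bigr => sg _; rewrite -sum_seqsE; apply: eq_bigr => I _.
exact: sum_seqsE.
Qed.

Section LagrangianDivergence.
Variables (R : realType) (n m q : nat) (W : set (pt R n m 0)) (A : Afam R n m q).
Hypothesis A_smooth : forall (s : nat) (sg : s.-tuple 'I_m) (I : s.-tuple (q.-tuple 'I_n))
  (i : (n.-1 - s).-tuple 'I_n), (s < n)%N -> smooth_on (@domk R n m q W) (A sg (map val I) i).
Variable p : pt R n m q.+2.
Hypothesis p_dom : @domk R n m q.+2 W p.

Local Notation P := (projk q.+1 p).
Local Notation Y := (topY P).
Local Notation coef s := ((s`! * (n.-1 - s)`!)%:R^-1 : R).

Definition horizontal_part s : R :=
  sum_seqs s (fun sg => sum_seqs s (fun I : seq (q.-tuple 'I_n) => sum_seqs (n.-1 - s) (fun i =>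
    \sum_(j < n) fd j (A sg (map val I) i) P * hjacY_cons Y j sg (map val I) i))).

Definition vertical_part s : R :=
  \sum_(a : 'I_m) sum_seqs s (fun sg => \sum_(J : q.-tuple 'I_n)
    sum_seqs s (fun I : seq (q.-tuple 'I_n) => sum_seqs (n.-1 - s) (fun i =>
      pdJ a J (A sg (map val I) i) (projk q P) *
      \sum_(j < n) Y a (j :: J) * hjacY_cons Y j sg (map val I) i))).

Lemma vertical_partE s : vertical_part s =
  sum_seqs s (fun sg => sum_seqs s (fun I : seq (q.-tuple 'I_n) => sum_seqs (n.-1 - s) (fun i =>
    \sum_(j < n) (\sum_(a : 'I_m) \sum_(J : q.-tuple 'I_n)
       Y a (j :: J) * pdJ a J (A sg (map val I) i) (projk q P)) *
    hjacY_cons Y j sg (map val I) i))).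
Proof.
rewrite /vertical_part -sum_seqs_sum; apply: eq_sum_seqs => sg _.
under eq_bigr => a _ do rewrite -sum_seqs_sum.
rewrite -sum_seqs_sum; apply: eq_sum_seqs => I _.
under eq_bigr => a _ do rewrite -sum_seqs_sum.
rewrite -sum_seqs_sum; apply: eq_sum_seqs => i _.
apply/esym; under eq_bigr do rewrite big_distrl /=.
rewrite exchange_big; apply: eq_bigr => a _ /=; under eq_bigr do rewrite big_distrl /=.
rewrite exchange_big; apply: eq_bigr => J _ /=; rewrite mulr_sumr.
by apply: eq_bigr => j _; rewrite [RHS]mulrCA mulrA.
Qed.

Lemma div_Vfield_parts :
  \sum_(j < n) fd j (Vfield A j) p = \sum_(s < n) coef s * (horizontal_part s + vertical_part s).
Proof.
under eq_bigr => j _ do rewrite (fd_Vfield A_smooth j p_dom).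
rewrite /hjac_pair exchange_big; apply: eq_bigr => s _; rewrite -mulr_sumr; congr (_ * _).
rewrite exchange_big /=; under eq_bigr do rewrite exchange_big /=.
under eq_bigr do under eq_bigr do rewrite exchange_big /=.
rewrite (@sum_tuples3E R n m q s (n.-1 - s) (fun sg I i => \sum_(j < n)
  (fd j (A sg I i) P + \sum_(a : 'I_m) \sum_(J : q.-tuple 'I_n)
     Y a (j :: J) * pdJ a J (A sg I i) (projk q P)) * hjacY_cons Y j sg I i)).
rewrite vertical_partE -!sum_seqsD; apply: eq_sum_seqs => sg _.
rewrite -!sum_seqsD; apply: eq_sum_seqs => I _; rewrite -!sum_seqsD; apply: eq_sum_seqs => i _.
by rewrite -big_split; apply: eq_bigr => j _; rewrite mulrDl.
Qed.

Let Lcol s : R :=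
  sum_seqs s (fun sg => sum_seqs s (fun I : seq (q.-tuple 'I_n) => sum_seqs (n - s) (fun i =>
    (\sum_(u <- zip (iota 0 (size sg)) (zip sg (map val I))) (-1) ^+ u.1 *
       pdJ u.2.1 u.2.2 (A (dropi u.1 sg) (dropi u.1 (map val I)) i) (projk q P)) *
    hjacY Y sg (map val I) i))).

Let Lfree s : R :=
  sum_seqs s (fun sg => sum_seqs s (fun I : seq (q.-tuple 'I_n) => sum_seqs (n - s) (fun i =>
    (\sum_(u <- zip (iota 0 (size i)) i) (-1) ^+ (size sg + u.1) *
       fd u.2 (A sg (map val I) (dropi u.1 i)) P) *
    hjacY Y sg (map val I) i))).

Lemma Lag_split :
  Lag A P = \sum_(s < n.+1) ((s`! * (n - s)`!)%:R)^-1 * (Lcol s + Lfree s).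
Proof.
apply: eq_bigr => s _; congr (_ * _).
rewrite (@sum_tuples3E R n m q s (n - s) (fun sg I i => Lcal A sg I i P * hjac sg I i P)).
rewrite -sum_seqsD; apply: eq_sum_seqs => sg _; rewrite -sum_seqsD; apply: eq_sum_seqs => I _.
by rewrite -sum_seqsD; apply: eq_sum_seqs => i _; rewrite -mulrDl.
Qed.

Lemma Lfree_parts :
  \sum_(s < n.+1) ((s`! * (n - s)`!)%:R)^-1 * Lfree s = \sum_(s < n) coef s * horizontal_part s.
Proof.
rewrite big_ord_recr /= {2}/Lfree subnn.
rewrite (eq_sum_seqs (G' := fun=> 0)) ?sum_seqs0 ?mulr0 ?addr0 => [|sg _]; last first.
  by rewrite (eq_sum_seqs (G' := fun=> 0)) ?sum_seqs0 // => I _ /=; rewrite big_nil mul0r.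
apply: eq_bigr => s _; rewrite -(fact_coef_free _ (ltn_ord s)) -mulrA; congr (_ * _).
rewrite /Lfree /horizontal_part; have -> : (n - s = (n.-1 - s).+1)%N by have := ltn_ord s; lia.
rewrite -sum_seqs_mull; apply: eq_sum_seqs => sg _; rewrite -sum_seqs_mull.
apply: eq_sum_seqs => I _.
exact: sum_free_index_terms.
Qed.

Lemma Lcol_parts :
  \sum_(s < n.+1) ((s`! * (n - s)`!)%:R)^-1 * Lcol s = \sum_(s < n) coef s * vertical_part s.
Proof.
rewrite big_ord_recl /= {1}/Lcol /=.
rewrite (eq_sum_seqs (G' := fun=> 0)) ?sum_seqs0 ?mulr0 ?add0r => [|i _]; last first.
  by rewrite big_nil mul0r.
apply: eq_bigr => s _; rewrite /bump leq0n add1n /Lcol.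
rewrite (sum_column_terms (topY_sym P) q s (n - s.+1)
  (fun a J sg I i => pdJ a J (A sg I i) (projk q P))).
rewrite mulrA fact_coef_col /vertical_part.
by have -> : (n - s.+1 = n.-1 - s)%N by lia.
Qed.

Lemma Lag_parts :
  Lag A P = \sum_(s < n) coef s * (horizontal_part s + vertical_part s).
Proof.
rewrite Lag_split (eq_bigr _ (fun s _ => mulrDr _ _ _)) big_split /= Lcol_parts Lfree_parts.
by rewrite -big_split /=; apply: eq_bigr => s _; rewrite mulrDr addrC.
Qed.

End LagrangianDivergence.

Theorem mainTheorem5 (R : realType) (n m q : nat) (W : set (pt R n m 0))
  (A : Afam R n m q) :
  open W ->
  (* smoothness of the A's on V^{r-1} *)
  (forall (s : nat) (sg : s.-tuple 'I_m) (I : s.-tuple (q.-tuple 'I_n))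
     (i : (n.-1 - s).-tuple 'I_n), (s < n)%N ->
     smooth_on (@domk R n m q W) (A sg (map val I) i)) ->
  (* symmetry property *)
  (forall (s : nat) (sg : s.-tuple 'I_m) (I : s.-tuple (q.-tuple 'I_n))
     (i : (n.-1 - s).-tuple 'I_n) (P : 'S_s) (Q : 'S_(n.-1 - s)) (p : pt R n m q),
     (s < n)%N -> (@domk R n m q W) p ->
     A (permt P sg) (map val (permt P I)) (permt Q i) p
       = (-1) ^+ (odd_perm P (+) odd_perm Q) * A sg (map val I) i p) ->
  exists V : 'I_n -> pt R n m q.+1 -> R,
    (forall j, smooth_on (@domk R n m q.+1 W) (V j)) /\
    forall p : pt R n m q.+2, (@domk R n m q.+2 W) p ->
      Lag A (projk q.+1 p) = \sum_(j < n) fd j (V j) p.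
Proof.
move=> W_open A_smooth _.
exists (Vfield A); split=> [j|p p_dom]; first by have := smooth_on_Vfield W_open A_smooth j; apply.
by rewrite (Lag_parts A p) (div_Vfield_parts A_smooth p_dom).
Qed.
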